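(* Let $m \geq 13$ be an odd integer. The digraph $L_{2m}$ admits a $\vec{C}_m$-factorization if and only if $3 \nmid m$.
   Context: $L_{2m} = \vec{X}(m,\{1,3\}) \wr \overline{K}_2$ is the digraph with vertex set $\{x_a, y_a : a \in \mathbb{Z}_m\}$ whose arcs are exactly $(u_a, v_b)$ for all $u, v \in \{x,y\}$ and all $a,b \in \mathbb{Z}_m$ with $b - a \equiv 1$ or $b-a \equiv 3 \pmod m$. A $\vec{C}_m$-factor of a digraph is a spanning subdigraph that is a disjoint union of directed $m$-cycles; a $\vec{C}_m$-factorization is a partition of the arc set into $\vec{C}_m$-factors. *)

From mathcomp Require Import all_boot.
Set Implicit Arguments. Unset Strict Implicit. Unset Printing Implicit Defensive.

Section Digraphs.
Variable T : finType.

Definition arcset (D : rel T) : {set T * T} := [set p | D p.1 p.2].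

Definition is_dicycle (D : rel T) (k : nat) (c : seq T) : Prop :=
  [/\ size c = k, uniq c & cycle D c].

Definition dicycle_arcs (c : seq T) : {set T * T} :=
  [set p | (p.1 \in c) && (p.2 == next c p.1)].

Definition Ck_factor (D : rel T) (k : nat) (F : {set T * T}) : Prop :=
  exists cs : seq (seq T),
    [/\ forall c, c \in cs -> is_dicycle D k c,
        forall v : T, count (fun c => v \in c) cs = 1 &
        F = \bigcup_(c <- cs) dicycle_arcs c].

Definition Ck_factorization (D : rel T) (k : nat) : Prop :=
  exists P : {set {set T * T}},
    partition P (arcset D) /\ forall F, F \in P -> Ck_factor D k F.
End Digraphs.

(* L_{2m} = X(m,{1,3}) wr K_2-bar: vertices (a, false) = x_a, (a, true) = y_a,
   a in Z_m (represented by 'I_m); arcs (u_a, v_b) iff b - a = 1 or 3 mod m. *)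
Definition Lvert (m : nat) : finType := ('I_m * bool)%type.

Definition Larc (m : nat) : rel (Lvert m) :=
  fun u v => ((v.1 : nat) == (u.1 + 1) %% m) || ((v.1 : nat) == (u.1 + 3) %% m).

From mathcomp Require Import all_boot zify.
Set Implicit Arguments. Unset Strict Implicit. Unset Printing Implicit Defensive.

(* For odd m >= 9 the circulant graph on Z_m with steps3 1 and 3 has a proper
   3-colouring [circ_col].  For i < 4 let sel_i be constantly true or the
   indicator of colour i - 1; for two distinct colours x, y the map
   i |-> (sel_i x, sel_i y) is a bijection 'I_4 -> bool * bool.  Factor i is the
   +1-cycle through the vertices (a, sel_i (col a)) together with the +3-cycle
   through (a, ~~ sel_i (col a)); when 3 does not divide m both are m-cycles and
   together they cover every vertex once, and the bijection puts each arc
   (u_a, v_(a+s)) into exactly one factor.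

   Conversely, a directed m-cycle with j arcs of length 3 has total displacement
   m + 2j, so m | 2j and, m being odd, it uses only +1 arcs or only +3 arcs.  If
   3 | m, an all-+3 cycle returns to its starting residue after m/3 and 2m/3
   steps, putting three distinct vertices on one residue, which carries only two.
   So every m-cycle is a +1-cycle and the arc x_0 -> x_3 lies in no factor. *)

Lemma next_nth_uniq (T : eqType) (c : seq T) (x0 : T) i :
  uniq c -> i < size c -> next c (nth x0 c i) = nth x0 c (i.+1 %% size c).
Proof.
move=> Uc lti; rewrite next_nth mem_nth // index_uniq //.
case: c Uc lti => [//|y p] Uc /= lti; rewrite ltnS in lti.
case: (ltngtP i (size p)) lti => [lt|//|eq] _.
  by rewrite modn_small ?ltnS //= (set_nth_default x0).
by rewrite eq modnn /= nth_default ?eq.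
Qed.

Lemma bigcup_seqP (T : finType) (I : eqType) (r : seq I) (G : I -> {set T}) x :
  reflect (exists2 i, i \in r & x \in G i) (x \in \bigcup_(i <- r) G i).
Proof.
elim: r => [|i r IH]; first by rewrite big_nil inE; right; case.
rewrite big_cons in_setU; apply: (iffP orP) => [[xGi|/IH[j jr xGj]]|[j]].
- by exists i; rewrite ?mem_head.
- by exists j; rewrite // in_cons jr orbT.
- by rewrite in_cons => /orP[/eqP->|jr xGj]; [left|right; apply/IH; exists j].
Qed.

Section Factorizations.
Variables (T : finType) (D : rel T) (k : nat).

Lemma Ck_factor_sub (F : {set T * T}) : Ck_factor D k F -> F \subset arcset D.
Proof.
case=> cs [cyc _ ->]; apply/subsetP => e /bigcup_seqP [c /cyc [_ _ Cc]].
by rewrite !inE => /andP [e1c /eqP ->]; apply: next_cycle Cc e1c.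
Qed.

Lemma Ck_factor_neq0 (F : {set T * T}) (t : T) : Ck_factor D k F -> F != set0.
Proof.
case=> cs [_ cover ->]; apply/set0Pn.
have /hasP [c cs_c tc] : has (fun c => t \in c) cs by rewrite has_count cover.
by exists (t, next c t); apply/bigcup_seqP; exists c; rewrite // !inE tc eqxx.
Qed.

Lemma Ck_factorization_family (I : finType) (F : I -> {set T * T}) (t : T) :
  (forall i j, i != j -> [disjoint F i & F j]) ->
  arcset D \subset \bigcup_i F i ->
  (forall i, Ck_factor D k (F i)) ->
  Ck_factorization D k.
Proof.
move=> disjF coverF factF; exists [set F i | i in I]; split; last first.
  by move=> _ /imsetP [i _ ->].
have F_neq0 : set0 \notin [set F i | i in I].
  by apply/imsetP => [[i _ /eqP]]; rewrite eq_sym (negbTE (Ck_factor_neq0 t (factF i))).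
have [trivF _] := trivIimset (fun i j _ _ ji => disjF i j ltac:(by rewrite eq_sym)) F_neq0.
rewrite /partition cover_imset trivF F_neq0 !andbT eqEsubset coverF andbT.
by apply/bigcupsP => i _; apply: Ck_factor_sub.
Qed.

Lemma Ck_factorization_arc_cycle u v : Ck_factorization D k -> D u v ->
  exists2 c, is_dicycle D k c & (u \in c) && (v == next c u).
Proof.
case=> P [/and3P [/eqP coverP _ _] factP] Duv.
have : (u, v) \in cover P by rewrite coverP inE.
case/bigcupP => F FP uvF; have [cs [cyc _ defF]] := factP F FP.
by move: uvF; rewrite defF => /bigcup_seqP [c /cyc c_cyc]; rewrite inE; exists c.
Qed.

End Factorizations.

Section StrideCycles.
Variables (m : nat) (m_gt0 : 0 < m).

Definition ord_mod (a : nat) : 'I_m := Ordinal (ltn_pmod a m_gt0).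

Lemma coprime_mul_modI s i j : coprime s m -> i < m -> j < m ->
  (s * i) %% m = (s * j) %% m -> i = j.
Proof.
move=> cop im jm.
wlog ij : i j im jm / i <= j.
  by move=> H; case: (leqP i j) => [|/ltnW] h e; [apply: H | apply/esym/H].
move/eqP; rewrite eq_sym eqn_mod_dvd ?leq_mul2l ?ij ?orbT // -mulnBr Gauss_dvdr;
  last by rewrite coprime_sym.
move=> dvd; case: (posnP (j - i)) => [|pos]; first lia.
by have := dvdn_leq pos dvd; lia.
Qed.

Variable s : nat.
Hypothesis s_coprime : coprime s m.

Definition stride : seq 'I_m := [seq ord_mod (s * i) | i <- iota 0 m].

Lemma size_stride : size stride = m.
Proof. by rewrite size_map size_iota. Qed.

Lemma nth_stride a0 i : i < m -> nth a0 stride i = ord_mod (s * i).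
Proof. by move=> im; rewrite (nth_map 0) ?size_iota // nth_iota. Qed.

Lemma stride_uniq : uniq stride.
Proof.
rewrite map_inj_in_uniq ?iota_uniq // => i j.
rewrite !mem_iota /= => im jm /(f_equal val); exact: coprime_mul_modI.
Qed.

Lemma mem_stride a : a \in stride.
Proof.
have size_le : size (enum 'I_m) <= size stride by rewrite size_enum_ord size_stride.
have [_ ->] := uniq_min_size stride_uniq (fun a _ => mem_enum _ a) size_le.
by rewrite mem_enum.
Qed.

Lemma next_stride a : next stride a = ord_mod (a + s).
Proof.
have ia : index a stride < m by rewrite -[X in _ < X]size_stride index_mem mem_stride.
set i := index a stride in ia *.
have ai : a = nth a stride i by rewrite nth_index ?mem_stride.
rewrite {1}ai next_nth_uniq ?stride_uniq ?size_stride // ai !nth_stride ?ltn_pmod //.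
by apply: val_inj => /=; rewrite modnMmr modnDml mulnSr.
Qed.

Variable lab : 'I_m -> bool.

Definition stride_cycle : seq (Lvert m) := [seq (a, lab a) | a <- stride].

Lemma labelled_inj : injective (fun a => (a, lab a)).
Proof. by move=> a b [<-]. Qed.

Lemma mem_stride_cycle (v : Lvert m) : (v \in stride_cycle) = (v.2 == lab v.1).
Proof.
apply/mapP/eqP => [[a _ ->] //|lv].
by exists v.1; rewrite ?mem_stride // -lv -surjective_pairing.
Qed.

Lemma next_stride_cycle a :
  next stride_cycle (a, lab a) = (ord_mod (a + s), lab (ord_mod (a + s))).
Proof. by rewrite (next_map labelled_inj stride_uniq) next_stride. Qed.

Lemma mem_stride_cycle_arcs (e : Lvert m * Lvert m) :
  (e \in dicycle_arcs stride_cycle) =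
  (e.1.2 == lab e.1.1) && (e.2 == (ord_mod (e.1.1 + s), lab (ord_mod (e.1.1 + s)))).
Proof.
case: e => [[a b] w]; rewrite inE mem_stride_cycle /=.
by case: eqP => //= ->; rewrite next_stride_cycle.
Qed.

Lemma stride_cycle_dicycle : s \in [:: 1; 3] -> is_dicycle (@Larc m) m stride_cycle.
Proof.
rewrite !inE => s13; split; first by rewrite size_map size_stride.
  by rewrite (map_inj_uniq labelled_inj) stride_uniq.
apply: cycle_from_next => [|v]; first by rewrite (map_inj_uniq labelled_inj) stride_uniq.
rewrite mem_stride_cycle => /eqP lv; rewrite [v]surjective_pairing lv next_stride_cycle.
by case/orP: s13 => /eqP ->; rewrite /Larc eqxx ?orbT.
Qed.

End StrideCycles.

(* The parity colouring, repaired near 0 where odd m makes it clash across the wrap-around. *)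
Definition circ_col (a : nat) : nat :=
  if a < 5 then nth 0 [:: 2; 0; 2; 1; 2] a else a %% 2.

Lemma circ_col_lt3 a : circ_col a < 3.
Proof. by rewrite /circ_col; case: ifP => [|_]; [case: a => [|[|[|[|[|]]]]] | lia]. Qed.

Lemma circ_col_proper m a s : 9 <= m -> odd m -> a < m -> s \in [:: 1; 3] ->
  circ_col a != circ_col ((a + s) %% m).
Proof.
move=> m9 m_odd am; rewrite !inE => s13.
have [a5|a5] := ltnP a 5.
  rewrite modn_small; last by lia.
  by move: a a5 {am} s13 => [|[|[|[|[|//]]]]] _ /orP[]/eqP->.
have [as_lt|as_ge] := ltnP (a + s) m.
  by rewrite modn_small // /circ_col !ifN; lia.
rewrite -{1}(subnK as_ge) modnDr modn_small; last by lia.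
rewrite /circ_col ltnNge a5 /=.
have : a + s - m < 3 by lia.
by case E: (a + s - m) => [|[|[|//]]] _ /=; lia.
Qed.

Definition sel (i : 'I_4) (x : nat) : bool := (i == 0 :> nat) || (x == i.-1).

Lemma sel_pair_inj x y : x < 3 -> y < 3 -> x != y ->
  injective (fun i => (sel i x, sel i y)).
Proof.
move: x y => [|[|[|//]]] [|[|[|//]]] // _ _ _
  [[|[|[|[|//]]]] ?] [[|[|[|[|//]]]] ?] //= _; exact: val_inj.
Qed.

Lemma sel_pair_surj x y b c : x < 3 -> y < 3 -> x != y ->
  exists i, (sel i x, sel i y) = (b, c).
Proof.
move: x y => [|[|[|//]]] [|[|[|//]]] // _ _ _; case: b; case: c;
  by [exists (@Ordinal 4 0 isT) | exists (@Ordinal 4 1 isT)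
     | exists (@Ordinal 4 2 isT) | exists (@Ordinal 4 3 isT)].
Qed.

Section Sufficiency.
Variable m : nat.
Hypotheses (m_ge9 : 9 <= m) (m_odd : odd m) (m_coprime3 : coprime 3 m).
Let m_gt0 : 0 < m := odd_gt0 m_odd.

Lemma stride13_coprime s : s \in [:: 1; 3] -> coprime s m.
Proof. by rewrite !inE => /orP[]/eqP->; rewrite ?coprime1n. Qed.

(* The +3-cycle carries the labels complementary to those of the +1-cycle. *)
Definition factor_label (s : nat) (i : 'I_4) (a : 'I_m) : bool :=
  (s == 3) (+) sel i (circ_col a).

Definition factor_cycles (i : 'I_4) : seq (seq (Lvert m)) :=
  [seq stride_cycle m_gt0 s (factor_label s i) | s <- [:: 1; 3]].

Definition factor (i : 'I_4) : {set Lvert m * Lvert m} :=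
  \bigcup_(c <- factor_cycles i) dicycle_arcs c.

Lemma factor_Ck_factor i : Ck_factor (@Larc m) m (factor i).
Proof.
exists (factor_cycles i); split=> // [c /mapP [s s13 ->]|v].
  exact: stride_cycle_dicycle _ (stride13_coprime s13) _ s13.
rewrite /= !mem_stride_cycle ?coprime1n // /factor_label /=.
by case: v.2; case: sel.
Qed.

Lemma mem_factor i e : reflect
  (exists2 s, s \in [:: 1; 3] &
     (e.1.2 == factor_label s i e.1.1) &&
     (e.2 == (ord_mod m_gt0 (e.1.1 + s), factor_label s i (ord_mod m_gt0 (e.1.1 + s)))))
  (e \in factor i).
Proof.
rewrite /factor big_map; apply: (iffP (bigcup_seqP _ _ _)) => -[s s13 es];
  exists s => //; move: es; rewrite mem_stride_cycle_arcs ?stride13_coprime //.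
Qed.

Lemma factors_disjoint i j : i != j -> [disjoint factor i & factor j].
Proof.
move=> ij; rewrite -setI_eq0; apply/eqP/setP => -[[a b] v]; rewrite !inE /=.
apply/andP => -[/mem_factor [s s13 /andP [/eqP ei1 /eqP ei2]]].
move=> /mem_factor [t t13 /andP [/eqP ej1 /eqP ej2]] /=.
move: ei1 ei2 ej1 ej2 => /= ei1 -> ej1 ej2.
have st : s = t.
  have [s_lt t_lt] : s < m /\ t < m by move: s13 t13; rewrite !inE; lia.
  by case: ej2 => /eqP; rewrite eqn_modDl !modn_small // => /eqP.
subst t; case: ej2 => sel_as.
set as_ := ord_mod m_gt0 (a + s) in sel_as *.
have col_as : circ_col a != circ_col as_ by apply: circ_col_proper.
case/eqP: ij; apply: (sel_pair_inj (circ_col_lt3 a) (circ_col_lt3 as_) col_as).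
congr pair; apply: (can_inj (addKb (s == 3))); [exact: etrans (esym ei1) ej1 | exact: sel_as].
Qed.

Lemma arcset_sub_factors : arcset (@Larc m) \subset \bigcup_i factor i.
Proof.
apply/subsetP => -[u v]; rewrite inE /= => uv.
have [s s13 vs] : exists2 s, s \in [:: 1; 3] & v.1 = ord_mod m_gt0 (u.1 + s).
  by case/orP: uv => /eqP vs; [exists 1 | exists 3] => //; apply: val_inj.
have col_uv : circ_col u.1 != circ_col v.1 by rewrite vs circ_col_proper.
have [i [sel_u sel_v]] := sel_pair_surj ((s == 3) (+) u.2) ((s == 3) (+) v.2)
  (circ_col_lt3 u.1) (circ_col_lt3 v.1) col_uv.
apply/bigcupP; exists i => //; apply/mem_factor; exists s => //=.
by rewrite /factor_label -vs sel_u sel_v !addKb eqxx -surjective_pairing eqxx.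
Qed.

Lemma Larc_Cm_factorization : Ck_factorization (@Larc m) m.
Proof.
exact: Ck_factorization_family (ord_mod m_gt0 0, false)
  factors_disjoint arcset_sub_factors factor_Ck_factor.
Qed.

End Sufficiency.

Section DicycleSteps.
Variables (m : nat) (c : seq (Lvert m)) (x0 : Lvert m).
Hypotheses (m_odd : odd m) (c_cycle : is_dicycle (@Larc m) m c).
Let m_gt0 : 0 < m := odd_gt0 m_odd.

Definition cyc_pt i := nth x0 c (i %% m).

Definition step3 i := (cyc_pt i.+1).1 != ((cyc_pt i).1 + 1) %% m :> nat.

Lemma next_cyc_pt i : next c (cyc_pt i) = cyc_pt i.+1.
Proof.
case: c_cycle => size_c uniq_c _.
rewrite /cyc_pt next_nth_uniq // size_c ?ltn_pmod //.
by rewrite -addn1 modnDml addn1.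
Qed.

Lemma cyc_pt_inj i j : i < m -> j < m -> cyc_pt i = cyc_pt j -> i = j.
Proof.
case: c_cycle => size_c uniq_c _ im jm.
by rewrite /cyc_pt !modn_small // => /eqP; rewrite nth_uniq ?size_c // => /eqP.
Qed.

Lemma cyc_pt_step i : (cyc_pt i.+1).1 = ((cyc_pt i).1 + 1 + 2 * step3 i) %% m :> nat.
Proof.
case: c_cycle => size_c _ cyc_c.
have : Larc (cyc_pt i) (cyc_pt i.+1).
  by rewrite -next_cyc_pt; apply: next_cycle cyc_c _; rewrite mem_nth // size_c ltn_pmod.
rewrite /step3 /Larc; case: eqP => [-> _|_ /eqP ->]; first by rewrite muln0 addn0.
by rewrite -addnA.
Qed.

Lemma cyc_pt_pos i :
  (cyc_pt i).1 = ((cyc_pt 0).1 + i + 2 * count step3 (iota 0 i)) %% m :> nat.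
Proof.
elim: i => [|i IH]; first by rewrite !addn0 modn_small.
have -> : iota 0 i.+1 = iota 0 i ++ [:: i] by rewrite -addn1 iotaD.
rewrite cyc_pt_step IH -addnA modnDml count_cat /= addn0.
congr (_ %% m); lia.
Qed.

Lemma count_step3_0_or_all :
  count step3 (iota 0 m) = 0 \/ count step3 (iota 0 m) = m.
Proof.
set C := count step3 (iota 0 m).
have C_le : C <= m by rewrite -[X in _ <= X](size_iota 0 m) count_size.
have : ((cyc_pt 0).1 + 2 * C) %% m = ((cyc_pt 0).1 + 0) %% m.
  have cyc_pt_m : cyc_pt m = cyc_pt 0 by rewrite /cyc_pt modnn mod0n.
  have := cyc_pt_pos m; rewrite cyc_pt_m -/C => pos_m.
  by rewrite addn0 (modn_small (ltn_ord _)) {2}pos_m addnAC modnDr.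
move/eqP; rewrite eqn_modDl mod0n -/(dvdn _ _) Gauss_dvdr ?coprimen2 //.
move=> m_dvd_C; have [|C_gt0] := posnP C; first by left.
by have := dvdn_leq C_gt0 m_dvd_C; right; lia.
Qed.

Lemma all_step3_pos : count step3 (iota 0 m) = m ->
  forall i, i <= m -> (cyc_pt i).1 = ((cyc_pt 0).1 + 3 * i) %% m :> nat.
Proof.
move=> all_step3 i im; rewrite cyc_pt_pos.
have -> : count step3 (iota 0 i) = i.
  have /allP steps3 : all step3 (iota 0 m) by rewrite all_count size_iota all_step3.
  rewrite -[RHS](size_iota 0 i) -count_predT; apply: eq_in_count => k.
  by rewrite mem_iota => ki; apply: steps3; rewrite mem_iota; lia.
by congr (_ %% m); lia.
Qed.

Lemma not_all_step3 : 3 %| m -> count step3 (iota 0 m) != m.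
Proof.
case/dvdnP=> q m_eq; apply/eqP => /all_step3_pos pos.
have q_gt0 : 0 < q by lia.
have same_pt k : k < 3 -> (cyc_pt (k * q)).1 = (cyc_pt 0).1 :> nat.
  move=> k3; rewrite pos; last by nia.
  by rewrite mulnCA [3 * q]mulnC -m_eq addnC modnMDl modn_small.
pose label (k : 'I_3) := (cyc_pt (k * q)).2.
have label_inj : injective label.
  move=> k l e2; apply: val_inj; apply/eqP; rewrite -(eqn_pmul2r q_gt0); apply/eqP.
  have [k3 l3] := (ltn_ord k, ltn_ord l).
  apply: cyc_pt_inj => /=; [nia | nia |].
  rewrite [cyc_pt (k * q)]surjective_pairing [cyc_pt (l * q)]surjective_pairing.
  by congr pair; [apply: val_inj; rewrite /= !same_pt | exact: e2].
by have := leq_card label label_inj; rewrite card_ord card_bool.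
Qed.

Lemma cyc_pt_succ : 3 %| m -> forall i, i < m ->
  (cyc_pt i.+1).1 = ((cyc_pt i).1 + 1) %% m :> nat.
Proof.
move=> m3 i im; rewrite cyc_pt_step.
have [no_step3|all_step3] := count_step3_0_or_all; last first.
  by have := not_all_step3 m3; rewrite all_step3 eqxx.
have /hasPn /(_ i) : ~~ has step3 (iota 0 m) by rewrite has_count no_step3.
by rewrite mem_iota /= => /(_ im) /negbTE ->; rewrite addn0.
Qed.

End DicycleSteps.

Lemma dicycle_next_succ m c x : odd m -> 3 %| m -> is_dicycle (@Larc m) m c ->
  x \in c -> (next c x).1 = (x.1 + 1) %% m :> nat.
Proof.
move=> m_odd m3 c_cycle xc.
have ix : index x c < m by case: c_cycle => size_c _ _; rewrite -[X in _ < X]size_c index_mem.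
have x_pt : cyc_pt c x (index x c) = x by rewrite /cyc_pt modn_small // nth_index.
by rewrite -x_pt next_cyc_pt // cyc_pt_succ.
Qed.

Theorem mainTheorem4 (m : nat) (Hm : 13 <= m) (Hodd : odd m) :
  Ck_factorization (@Larc m) m <-> ~~ (3 %| m).
Proof.
split=> [fact|m3]; last by apply: Larc_Cm_factorization; rewrite ?prime_coprime //; lia.
apply/negP => m3.
have [m_gt0 m_gt3] : 0 < m /\ 3 < m by lia.
pose x_0 : Lvert m := (Ordinal m_gt0, false).
pose x_3 : Lvert m := (Ordinal m_gt3, false).
have arc03 : Larc x_0 x_3 by rewrite /Larc /= add0n (modn_small m_gt3) eqxx orbT.
have [c c_cycle /andP [x0c /eqP next_x0]] := Ck_factorization_arc_cycle fact arc03.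
have := dicycle_next_succ Hodd m3 c_cycle x0c.
by rewrite -next_x0 /= modn_small //; lia.
Qed.
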